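(* Let $X$ be a finite nonempty set, $Y$ a nonempty compact metric space, and $u:X\times Y\to\mathbb{R}$ such that $y\mapsto u(x,y)$ is continuous for each $x\in X$. Run the Combinatorial-Continuous Double Oracle (CCDO) procedure with tolerance $\epsilon\ge 0$. Then: (1) If $\epsilon = 0$ and the procedure runs for infinitely many iterations, then for every subsequence of the subgame equilibria $\{(p_k^*,q_k^* )\}$ that converges weakly to some $(p^*,q^* )\in\Delta_X\times\Delta_Y$ (i.e. $p_k^*\Rightarrow p^*$, $q_k^*\Rightarrow q^*$ along the subsequence), the limit $(p^*,q^* )$ is a mixed Nash equilibrium of the whole game. (2) If $\epsilon>0$, the procedure terminates after finitely many iterations and its output $(p_k^*,q_k^* )$ is an $\epsilon$-equilibrium of the whole game.
   Context: Game: Player 1 picks $x\in X$, Player 2 picks $y\in Y$; Player 1 receives $u(x,y)$, Player 2 receives $-u(x,y)$. $\Delta_X$ is the set of probability vectors on $X$, $\Delta_Y$ the set of Borel probability measures on $Y$, and $U(p,q)=\sum_{x} p(x)\int_Y u(x,y)\,dq(y)$; pure strategies are identified with point masses. $(p^*,q^* )$ is a mixed Nash equilibrium if $U(p,q^* )\le U(p^*,q^* )\le U(p^*,q)$ for all $p\in\Delta_X,q\in\Delta_Y$, and an $\epsilon$-equilibrium if $U(p,q^* )-\epsilon\le U(p^*,q^* )\le U(p^*,q)+\epsilon$ for all such $p,q$. Weak convergence $q_k\Rightarrow q$ means $\int f\,dq_k\to\int f\,dq$ for all bounded continuous $f$ on $Y$; on $X$ it is coordinatewise convergence. Best response sets: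 $\mathbb{BR}_1(q)=\arg\max_{x\in X}U(x,q)$, $\mathbb{BR}_2(p)=\arg\min_{y\in Y}U(p,y)$. CCDO procedure: start from nonempty finite sets $X_1\subseteq X$, $Y_1\subseteq Y$. At iteration $k$: compute a mixed Nash equilibrium $(p_k^*,q_k^* )$ of the finite subgame $\langle X_k, Y_k, u\rangle$ (viewed as mixed strategies of the whole game supported on $X_k$, $Y_k$); choose $x_{k+1}\in\mathbb{BR}_1(q_k^* )$ and $y_{k+1}\in\mathbb{BR}_2(p_k^* )$; set $X_{k+1}=X_k\cup\{x_{k+1}\}$, $Y_{k+1}=Y_k\cup\{y_{k+1}\}$; stop and output $(p_k^*,q_k^* )$ if $U(x_{k+1},q_k^* )-U(p_k^*,y_{k+1})\le\epsilon$, otherwise continue. *)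

From HB Require Import structures.
From mathcomp Require Import all_boot all_order all_algebra.
From mathcomp Require Import all_classical all_reals all_analysis.
Set Implicit Arguments. Unset Strict Implicit. Unset Printing Implicit Defensive.
Import Order.TTheory GRing.Theory Num.Theory.
Import numFieldNormedType.Exports.
Local Open Scope classical_set_scope.
Local Open Scope ring_scope.

Notation borel Y := (g_sigma_algebraType (@open Y)) (only parsing).

Section Game.
Context {R : realType} {X : finType} {Y : ptopologicalType}.
Variable u : X -> Y -> R.

Definition is_dist (p : X -> R) : Prop :=
  (forall x, 0 <= p x) /\ \sum_(x : X) p x = 1.

Definition pt (x : X) : X -> R := fun x' => if x' == x then 1 else 0.

Definition U (p : X -> R) (q : {measure set (borel Y) -> \bar R}) : R :=
  \sum_(x : X) p x * fine (\int[q]_(y in [set: borel Y]) (u x y)%:E).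

Definition BR1 (q : probability (borel Y) R) : set X :=
  [set x | forall x' : X, U (pt x') q <= U (pt x) q].
Definition BR2 (p : X -> R) : set Y :=
  [set y | forall y' : Y, U p (@dirac _ (borel Y) y R) <= U p (@dirac _ (borel Y) y' R)].

Definition is_NE (p : X -> R) (q : probability (borel Y) R) : Prop :=
  is_dist p /\
  (forall p', is_dist p' -> U p' q <= U p q) /\
  (forall q' : probability (borel Y) R, U p q <= U p q').

Definition is_eps_NE (eps : R) (p : X -> R) (q : probability (borel Y) R) : Prop :=
  is_dist p /\
  (forall p', is_dist p' -> U p' q - eps <= U p q) /\
  (forall q' : probability (borel Y) R, U p q <= U p q' + eps).

Definition supp_X (p : X -> R) (S : set X) : Prop := forall x, ~ S x -> p x = 0.
Definition supp_Y (q : probability (borel Y) R) (T : set Y) : Prop :=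
  q (~` T : set (borel Y)) = 0%E.

(* (p,q) is a mixed Nash equilibrium of the finite subgame <S, T, u>,
   viewed as mixed strategies of the whole game supported on S and T *)
Definition is_subgame_NE (S : set X) (T : set Y) (p : X -> R)
    (q : probability (borel Y) R) : Prop :=
  is_dist p /\ supp_X p S /\ supp_Y q T /\
  (forall p', is_dist p' -> supp_X p' S -> U p' q <= U p q) /\
  (forall q' : probability (borel Y) R, supp_Y q' T -> U p q <= U p q').

Definition ccdo_step (Xs : nat -> set X) (Ys : nat -> set Y)
    (p : nat -> X -> R) (q : nat -> probability (borel Y) R)
    (xn : nat -> X) (yn : nat -> Y) (k : nat) : Prop :=
  is_subgame_NE (Xs k) (Ys k) (p k) (q k) /\
  BR1 (q k) (xn k) /\ BR2 (p k) (yn k) /\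
  Xs k.+1 = Xs k `|` [set xn k] /\ Ys k.+1 = Ys k `|` [set yn k].

Definition ccdo_init (Xs : nat -> set X) (Ys : nat -> set Y) : Prop :=
  Xs 0%N !=set0 /\ finite_set (Xs 0%N) /\ Ys 0%N !=set0 /\ finite_set (Ys 0%N).

Definition ccdo_gap (p : nat -> X -> R) (q : nat -> probability (borel Y) R)
    (xn : nat -> X) (yn : nat -> Y) (k : nat) : R :=
  U (pt (xn k)) (q k) - U (p k) (@dirac _ (borel Y) (yn k) R).

End Game.

Definition weak_cvg {R : realType} {Y : ptopologicalType}
    (qs : nat -> probability (borel Y) R) (q : probability (borel Y) R) : Prop :=
  forall f : Y -> R, continuous f -> (exists M : R, forall y, `|f y| <= M) ->
    (fun n => fine (\int[qs n]_(y in [set: borel Y]) (f y)%:E)) @ \oo -->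
      fine (\int[q]_(y in [set: borel Y]) (f y)%:E).

From HB Require Import structures.
From mathcomp Require Import all_boot all_order all_algebra.
From mathcomp Require Import all_classical all_reals all_analysis.
From mathcomp Require Import measurable_realfun lra.
Import Order.TTheory GRing.Theory Num.Theory.
Import numFieldNormedType.Exports.
Local Open Scope classical_set_scope.
Local Open Scope ring_scope.

(* Two facts drive the argument.  As X is finite and the sets X_k only grow,
   from some iteration on Player 1's best response already lies in X_k, so it
   cannot beat the subgame value.  As Y is compact, the responses y_k have a
   cluster point; so for every d > 0 there are arbitrarily late k such that
   Y_k contains an earlier response y_m with u(., y_m) within d of u(., y_k),
   whence the subgame value exceeds U(p_k, y_k) by at most d.  For eps > 0 this
   bounds the gap by eps at some iteration; for eps = 0 both inequalities pass
   to the limit along a convergent subsequence. *)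

Lemma homo_ltn_leq_id {phi : nat -> nat} :
  {homo phi : m n / (m < n)%N >-> (m < n)%N} -> forall n, (n <= phi n)%N.
Proof. by move=> phi_incr; elim=> // n IHn; apply: leq_ltn_trans IHn (phi_incr _ _ _). Qed.

Lemma growing_sets_mem {T : Type} {S : nat -> set T} {z : nat -> T} :
  (forall k, S k.+1 = S k `|` [set z k]) -> forall k j, (k < j)%N -> S j (z k).
Proof.
move=> Snext k j ltkj.
have Smono : {homo S : i j / (i <= j)%N >-> i `<=` j}.
  apply: homo_leq => [A x //|A B C AB BC x /AB/BC//|i x Sx].
  by rewrite Snext; left.
by apply: (Smono k.+1); rewrite // Snext; right.
Qed.

Lemma growing_sets_eventually_mem {T : finType} {S : nat -> set T} {z : nat -> T} :
  (forall k, S k.+1 = S k `|` [set z k]) -> \forall k \near \oo, S k (z k).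
Proof.
move=> Snext.
suff : \forall k \near \oo, forall x, z k = x -> S k x by apply: filterS => k /(_ _ erefl).
apply: filter_forall => x.
have [[k0 <-]|never_x] := pselect (exists k0, z k0 = x); last first.
  by apply: nearW => k zk; case: never_x; exists k.
by near=> k => _; apply: growing_sets_mem Snext _ _ _; near: k; exact: nbhs_infty_gt.
Unshelve. all: by end_near.
Qed.

Lemma le0_cvg_frequently {R : realType} {a : nat -> R} {l : R} :
  a @ \oo --> l ->
  (forall d, 0 < d -> forall N, exists2 n, (N <= n)%N & a n <= d) -> l <= 0.
Proof.
move=> a_l a_small; apply/ler_addgt0Pr => e e_gt0; rewrite add0r.
have e2_gt0 : 0 < e / 2 by rewrite divr_gt0.
have [N _ a_near] : \forall n \near \oo, `|l - a n| < e / 2 by exact: cvgr_dist_lt.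
have [n Nn an] := a_small _ e2_gt0 N.
have := a_near n Nn; rewrite ltr_distl => /andP[_]; lra.
Qed.

Section ContinuousFunctions.
Context {R : realType} {Y : ptopologicalType}.
Hypothesis Y_compact : compact [set: Y].

Lemma continuous_borel_measurable (f : Y -> R) :
  continuous f -> measurable_fun [set: borel Y] f.
Proof.
move=> /continuousP f_cont.
apply: (measurability _ (RGenOpens.measurableE R)).
move=> _ [_ [a [b ->] <-]]; rewrite setTI.
by apply: sub_sigma_algebra; apply: f_cont; exact: interval_open.
Qed.

Lemma continuous_bounded (f : Y -> R) :
  continuous f -> exists M, forall y, `|f y| <= M.
Proof.
move=> f_cont.
have : compact (f @` setT) by apply: continuous_compact => //; exact: continuous_subspaceT.
move=> /compact_bounded[M [_ HM]].
by exists (`|M| + 1) => y; apply: HM; [rewrite ltr_pwDr// ler_norm | exists y].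
Qed.

Lemma continuous_integrable (f : Y -> R) (q : probability (borel Y) R) :
  continuous f -> q.-integrable [set: borel Y] (EFin \o f).
Proof.
move=> f_cont; apply: measurable_bounded_integrable => //.
- by apply: le_lt_trans (probability_le1 _ _) _; rewrite ?ltry.
- exact: continuous_borel_measurable.
have [M HM] := continuous_bounded _ f_cont.
by exists M; split=> [|z Mz y _]; [exact: num_real | apply: le_trans (HM y) (ltW Mz)].
Qed.

Lemma continuous_lincomb (I : Type) (s : seq I) (c : I -> R) (f : I -> Y -> R) :
  (forall i, continuous (f i)) -> continuous (fun y => \sum_(i <- s) c i * f i y).
Proof.
move=> f_cont; apply: continuous_big => [|i _]; first exact: add_continuous.
by move=> y; apply: cvgM; [exact: cvg_cst | exact: f_cont].
Qed.

Lemma Rintegral_lincomb (I : Type) (s : seq I) (c : I -> R) (f : I -> Y -> R)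
    (q : probability (borel Y) R) :
  (forall i, continuous (f i)) ->
  \int[q]_(y in [set: borel Y]) \sum_(i <- s) c i * f i y =
  \sum_(i <- s) c i * \int[q]_(y in [set: borel Y]) f i y.
Proof.
move=> f_cont; elim: s => [|i s IHs].
  under eq_Rintegral do rewrite big_nil.
  by rewrite big_nil Rintegral_cst // mul0r.
under eq_Rintegral do rewrite big_cons.
rewrite big_cons RintegralD ?RintegralZl ?IHs //; apply: continuous_integrable => //.
- by move=> y; apply: cvgM; [exact: cvg_cst | exact: f_cont].
- exact: continuous_lincomb.
Qed.

Lemma compact_frequently_close {I : finType} {f : I -> Y -> R} (z : nat -> Y) :
  (forall i, continuous (f i)) -> forall d, 0 < d -> forall N,
  exists m n, [/\ (N <= m)%N, (m < n)%N & forall i, `|f i (z m) - f i (z n)| < d].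
Proof.
move=> f_cont d d_gt0 N.
have [y0 [_ y0_cluster]] := Y_compact (z @ \oo) _ filterT.
pose B := [set y | forall i, `|f i y0 - f i y| < d / 2].
have B_nbhs : nbhs y0 B.
  by apply: filter_forall => i; apply: cvgr_dist_lt; [exact: f_cont | rewrite divr_gt0].
have tail_meets_B M : exists2 n, (M <= n)%N & B (z n).
  have tail : (z @ \oo) [set z n | n in [set n | (M <= n)%N]].
    by apply: filterS (nbhs_infty_ge M) => n Mn; exists n.
  by have [_ [[n Mn <-] Bzn]] := y0_cluster _ _ tail B_nbhs; exists n.
have [m Nm Bm] := tail_meets_B N; have [n mn Bn] := tail_meets_B m.+1.
exists m, n; split=> // i.
by rewrite (le_lt_trans (ler_distD (f i y0) _ _)) // distrC (splitr d) ltrD.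
Qed.

End ContinuousFunctions.

Section MixedStrategies.
Context {R : realType} {X : finType}.

Lemma is_dist_sum_le (p : X -> R) (a : X -> R) (c : R) :
  is_dist p -> (forall x, a x <= c) -> \sum_x p x * a x <= c.
Proof.
move=> [p_ge0 p_sum1] a_le.
rewrite -[leRHS]mul1r -p_sum1 mulr_suml.
by apply: ler_sum => x _; rewrite ler_wpM2l.
Qed.

Lemma pt_dist (x : X) : is_dist (pt x : X -> R).
Proof.
split=> [x'|]; first by rewrite /pt; case: eqP.
by rewrite (bigD1 x) //= /pt eqxx big1 ?addr0 // => x' /negbTE ->.
Qed.

Lemma pt_supp (x : X) (S : set X) : S x -> supp_X (pt x : X -> R) S.
Proof. by move=> Sx x' S'x'; rewrite /pt; case: eqP => // ->{x'} in S'x' *. Qed.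

End MixedStrategies.

Section Payoffs.
Context {R : realType} {X : finType} {Y : ptopologicalType}.
Variable u : X -> Y -> R.
Hypothesis u_cont : forall x, continuous (u x).
Hypothesis Y_compact : compact [set: Y].

Definition payoff (p : X -> R) (y : Y) : R := \sum_x p x * u x y.

Lemma U_pt (x : X) (q : {measure set (borel Y) -> \bar R}) :
  U u (pt x) q = \int[q]_(y in [set: borel Y]) u x y.
Proof.
rewrite /U (bigD1 x) //= /pt eqxx mul1r big1 ?addr0 // => x' /negbTE ->.
by rewrite mul0r.
Qed.

Lemma U_pt_sum (p : X -> R) (q : {measure set (borel Y) -> \bar R}) :
  U u p q = \sum_x p x * U u (pt x) q.
Proof. by apply: eq_bigr => x _; rewrite U_pt. Qed.

Lemma U_dirac (p : X -> R) (y : Y) : U u p (@dirac _ (borel Y) y R) = payoff p y.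
Proof.
apply: eq_bigr => x _; rewrite integral_dirac //; last first.
  by apply/measurable_EFinP; exact: continuous_borel_measurable.
by rewrite diracT mul1e.
Qed.

Lemma payoff_continuous (p : X -> R) : continuous (payoff p).
Proof. exact: continuous_lincomb. Qed.

Lemma U_Rintegral (p : X -> R) (q : probability (borel Y) R) :
  U u p q = \int[q]_(y in [set: borel Y]) payoff p y.
Proof.
by rewrite U_pt_sum /payoff Rintegral_lincomb //; under eq_bigr do rewrite U_pt.
Qed.

Lemma U_ge (p : X -> R) (q : probability (borel Y) R) (c : R) :
  (forall y, c <= payoff p y) -> c <= U u p q.
Proof.
move=> c_le; rewrite U_Rintegral.
have -> : c = \int[q]_(y in [set: borel Y]) c.
  rewrite Rintegral_cst // -[LHS]mulr1; congr (c * _).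
  by rewrite -[1]/(fine 1%E); congr fine; exact/esym/probability_setT.
apply: le_Rintegral => //; apply: continuous_integrable => //.
  exact: cst_continuous.
exact: payoff_continuous.
Qed.

Lemma U_le (p : X -> R) (q : {measure set (borel Y) -> \bar R}) (c : R) :
  is_dist p -> (forall x, U u (pt x) q <= c) -> U u p q <= c.
Proof. by rewrite U_pt_sum; exact: is_dist_sum_le. Qed.

Lemma payoff_leD (p : X -> R) (y1 y2 : Y) (d : R) :
  is_dist p -> (forall x, u x y1 <= u x y2 + d) -> payoff p y1 <= payoff p y2 + d.
Proof.
move=> p_dist u_le; rewrite -lerBlDl /payoff -sumrB.
under eq_bigr do rewrite -mulrBr.
by apply: is_dist_sum_le => // x; rewrite lerBlDl.
Qed.

Lemma payoff_cvg {ps : nat -> X -> R} {p : X -> R} (y : Y) :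
  (forall x, ps n x @[n --> \oo] --> p x) -> payoff (ps n) y @[n --> \oo] --> payoff p y.
Proof.
move=> ps_cvg; apply: (cvg_big (op := +%R) (x0 := 0)) => // [|x _].
  exact: add_continuous.
by apply: cvgM; [exact: ps_cvg | exact: cvg_cst].
Qed.

Lemma U_cvg {ps : nat -> X -> R} {p : X -> R} {qs : nat -> probability (borel Y) R}
    {q : probability (borel Y) R} :
  (forall x, ps n x @[n --> \oo] --> p x) -> weak_cvg qs q ->
  U u (ps n) (qs n) @[n --> \oo] --> U u p q.
Proof.
move=> ps_cvg qs_cvg; apply: (cvg_big (op := +%R) (x0 := 0)) => // [|x _].
  exact: add_continuous.
apply: cvgM; first exact: ps_cvg.
by apply: qs_cvg; [exact: u_cont | exact: continuous_bounded].
Qed.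

End Payoffs.

Section CCDOStep.
Context {R : realType} {X : finType} {Y : ptopologicalType}.
Context {u : X -> Y -> R}.
Hypothesis u_cont : forall x, continuous (u x).
Hypothesis Y_compact : compact [set: Y].
Context {Xs : nat -> set X} {Ys : nat -> set Y} {p : nat -> X -> R}
  {q : nat -> probability (borel Y) R} {xn : nat -> X} {yn : nat -> Y} {k : nat}.
Hypothesis step : ccdo_step u Xs Ys p q xn yn k.

Lemma ccdo_dist : is_dist (p k).
Proof. by case: step => [[]]. Qed.

Lemma ccdo_Xs_next : Xs k.+1 = Xs k `|` [set xn k].
Proof. by case: step => _ [_ [_ []]]. Qed.

Lemma ccdo_Ys_next : Ys k.+1 = Ys k `|` [set yn k].
Proof. by case: step => _ [_ [_ []]]. Qed.

Lemma ccdo_BR1 x : U u (pt x) (q k) <= U u (pt (xn k)) (q k).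
Proof. by case: step => _ [BR1_xn _]; exact: BR1_xn. Qed.

Lemma ccdo_BR2 y : payoff u (p k) (yn k) <= payoff u (p k) y.
Proof. by case: step => _ [_ [BR2_yn _]]; rewrite -!U_dirac //; exact: BR2_yn. Qed.

Lemma ccdo_subgame_le : Xs k (xn k) -> U u (pt (xn k)) (q k) <= U u (p k) (q k).
Proof.
move=> Xs_xn; case: step => [[_ [_ [_ [NE1 _]]]] _].
by apply: NE1; [exact: pt_dist | exact: pt_supp].
Qed.

Lemma ccdo_subgame_ge y : Ys k y -> U u (p k) (q k) <= payoff u (p k) y.
Proof.
move=> Ys_y; case: step => [[_ [_ [_ [_ NE2]]]] _].
have dirac_out : @dirac _ (borel Y) y R (~` Ys k) = 0%E.
  by rewrite diracE memNset //= => /(_ Ys_y).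
by rewrite -U_dirac //; exact: NE2.
Qed.

Lemma ccdo_BR2_le_value : payoff u (p k) (yn k) <= U u (p k) (q k).
Proof. by apply: U_ge => // y; exact: ccdo_BR2. Qed.

Lemma ccdo_value_le_BR1 : U u (p k) (q k) <= U u (pt (xn k)) (q k).
Proof. by apply: U_le; [exact: ccdo_dist | exact: ccdo_BR1]. Qed.

Lemma ccdo_eps_NE (eps : R) :
  ccdo_gap u p q xn yn k <= eps -> is_eps_NE u eps (p k) (q k).
Proof.
rewrite /ccdo_gap U_dirac // => gap_le.
have value_ge := ccdo_BR2_le_value; have value_le := ccdo_value_le_BR1.
split; first exact: ccdo_dist.
split=> [p' p'_dist | q'].
  have : U u p' (q k) <= U u (pt (xn k)) (q k) by apply: U_le => //; exact: ccdo_BR1.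
  lra.
have : payoff u (p k) (yn k) <= U u (p k) q' by apply: U_ge => // y; exact: ccdo_BR2.
lra.
Qed.

End CCDOStep.

Section CCDORun.
Context {R : realType} {X : finType} {Y : ptopologicalType}.
Context {u : X -> Y -> R}.
Hypothesis u_cont : forall x, continuous (u x).
Hypothesis Y_compact : compact [set: Y].
Context {Xs : nat -> set X} {Ys : nat -> set Y} {p : nat -> X -> R}
  {q : nat -> probability (borel Y) R} {xn : nat -> X} {yn : nat -> Y}.
Hypothesis step : forall k, ccdo_step u Xs Ys p q xn yn k.

Lemma ccdo_eventually_subgame_le :
  \forall k \near \oo, U u (pt (xn k)) (q k) <= U u (p k) (q k).
Proof.
have := growing_sets_eventually_mem (fun k => ccdo_Xs_next (step k)).
by apply: filterS => k; exact: ccdo_subgame_le.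
Qed.

Lemma ccdo_value_frequently_le {phi : nat -> nat} :
  {homo phi : m n / (m < n)%N >-> (m < n)%N} -> forall d, 0 < d -> forall N,
  exists2 n, (N <= n)%N &
    U u (p (phi n)) (q (phi n)) <= payoff u (p (phi n)) (yn (phi n)) + d.
Proof.
move=> phi_incr d d_gt0 N.
have [m [n [Nm mn close]]] :=
  compact_frequently_close Y_compact (yn \o phi) u_cont _ d_gt0 N.
exists n; first exact: leq_trans Nm (ltnW mn).
have Ys_ym : Ys (phi n) (yn (phi m)).
  exact: growing_sets_mem (fun k => ccdo_Ys_next (step k)) _ _ (phi_incr _ _ mn).
apply: le_trans (ccdo_subgame_ge u_cont (step _) _ Ys_ym) _.
apply: payoff_leD; first exact: ccdo_dist (step _).
by move=> x; apply/ltW/ltr_distlDr; exact: close.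
Qed.

Section Limit.
Context {phi : nat -> nat} {pstar : X -> R} {qstar : probability (borel Y) R}.
Hypothesis phi_incr : {homo phi : m n / (m < n)%N >-> (m < n)%N}.
Hypothesis p_cvg : forall x, p (phi n) x @[n --> \oo] --> pstar x.
Hypothesis q_cvg : weak_cvg (fun n => q (phi n)) qstar.

Lemma ccdo_limit_BR1 x : U u (pt x) qstar <= U u pstar qstar.
Proof.
have pt_cvg : U u (pt x) (q (phi n)) @[n --> \oo] --> U u (pt x) qstar.
  by apply: U_cvg => // x'; exact: cvg_cst.
apply: (ler_cvg_to pt_cvg (U_cvg u u_cont Y_compact p_cvg q_cvg)).
have [K _ subK] := ccdo_eventually_subgame_le.
near=> n; apply: le_trans (ccdo_BR1 (step _) x) (subK _ _).
rewrite /=; apply: leq_trans _ (homo_ltn_leq_id phi_incr n); near: n; exact: nbhs_infty_ge.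
Unshelve. all: by end_near.
Qed.

Lemma ccdo_limit_BR2 y : U u pstar qstar <= payoff u pstar y.
Proof.
rewrite -subr_le0.
apply: le0_cvg_frequently
  (cvgB (U_cvg u u_cont Y_compact p_cvg q_cvg) (payoff_cvg u y p_cvg)) _.
move=> d d_gt0 N; have [n Nn value_le] := ccdo_value_frequently_le phi_incr _ d_gt0 N.
exists n => //; rewrite lerBlDl (le_trans value_le) // lerD2r.
exact: ccdo_BR2 (step _) y.
Qed.

Lemma ccdo_limit_NE : is_dist pstar -> is_NE u pstar qstar.
Proof.
split=> //; split=> [p' p'_dist | q'].
  by apply: U_le => // x; exact: ccdo_limit_BR1.
by apply: U_ge => // y; exact: ccdo_limit_BR2.
Qed.

End Limit.

Lemma ccdo_terminates (eps : R) : 0 < eps -> exists k, ccdo_gap u p q xn yn k <= eps.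
Proof.
move=> eps_gt0; have [K _ subK] := ccdo_eventually_subgame_le.
have [n Kn value_le] := ccdo_value_frequently_le (phi := id) (fun _ _ => id) _ eps_gt0 K.
exists n; rewrite /ccdo_gap U_dirac // lerBlDl.
exact: le_trans (subK _ Kn) value_le.
Qed.

End CCDORun.

Theorem theorem2 (R : realType) (X : finType) (Y : pseudoPMetricType R)
  (u : X -> Y -> R)
  (hXne : [set: X] !=set0) (hYne : [set: Y] !=set0)
  (hYhaus : hausdorff_space Y) (hYcpt : compact [set: Y])
  (hucont : forall x : X, continuous (u x)) :
  (* (1) epsilon = 0, infinitely many iterations *)
  (forall (Xs : nat -> set X) (Ys : nat -> set Y) (p : nat -> X -> R)
      (q : nat -> probability (borel Y) R) (xn : nat -> X) (yn : nat -> Y),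
    ccdo_init Xs Ys ->
    (forall k, ccdo_step u Xs Ys p q xn yn k) ->
    (forall k, 0 < ccdo_gap u p q xn yn k) ->
    forall (phi : nat -> nat) (pstar : X -> R) (qstar : probability (borel Y) R),
      {homo phi : m n / (m < n)%N >-> (m < n)%N} ->
      is_dist pstar ->
      (forall x : X, (fun n => p (phi n) x) @ \oo --> pstar x) ->
      weak_cvg (fun n => q (phi n)) qstar ->
      is_NE u pstar qstar) /\
  (* (2) epsilon > 0: termination and epsilon-equilibrium output *)
  (forall eps : R, 0 < eps ->
    (forall (Xs : nat -> set X) (Ys : nat -> set Y) (p : nat -> X -> R)
        (q : nat -> probability (borel Y) R) (xn : nat -> X) (yn : nat -> Y),
      ccdo_init Xs Ys ->
      (forall k, ccdo_step u Xs Ys p q xn yn k) ->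
      exists k, ccdo_gap u p q xn yn k <= eps) /\
    (forall (Xs : nat -> set X) (Ys : nat -> set Y) (p : nat -> X -> R)
        (q : nat -> probability (borel Y) R) (xn : nat -> X) (yn : nat -> Y)
        (n : nat),
      ccdo_init Xs Ys ->
      (forall k, (k <= n)%N -> ccdo_step u Xs Ys p q xn yn k) ->
      (forall k, (k < n)%N -> eps < ccdo_gap u p q xn yn k) ->
      ccdo_gap u p q xn yn n <= eps ->
      is_eps_NE u eps (p n) (q n))).
Proof.
split=> [Xs Ys p q xn yn _ step _ phi pstar qstar phi_incr pstar_dist | eps eps_gt0].
  move=> p_cvg q_cvg.
  exact (ccdo_limit_NE hucont hYcpt step phi_incr p_cvg q_cvg pstar_dist).
split=> [Xs Ys p q xn yn _ step | Xs Ys p q xn yn n _ step _ gap_le].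
  exact (ccdo_terminates hucont hYcpt step _ eps_gt0).
exact (ccdo_eps_NE hucont hYcpt (step n (leqnn n)) _ gap_le).
Qed.
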